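(* Let $\overline{X}$ be a set, let $k$ divide $T$, and for each interval $j=1,\dots,T/k$ let $f_{j,1},\dots,f_{j,k}:\overline{X}\to[0,n]$ be functions fixed in advance. In the random-costs setting, in each interval $j$ a learner chooses $x_j\in\overline{X}$ (depending only on its own randomness and on previously observed functions), then an index $i_j$ is drawn uniformly from $\{1,\dots,k\}$ independently of everything else, and the learner observes and incurs $f^r_j:=f_{j,i_j}$ at $x_j$. In the corresponding average-costs setting the cost function of interval $j$ is $\overline{f}_j:=\frac1k\sum_{i=1}^k f_{j,i}$. If the learner's strategy has expected average regret at most $R(T)$ in the random-costs setting, i.e. $\frac1T\mathbb{E}\big[\sum_j f^r_j(x_j)-\min_{x\in\overline{X}}\sum_j f^r_j(x)\big]\le R(T)$, then the same strategy (played against the functions $\overline{f}_j$) satisfies $\frac1T\Big(\mathbb{E}\Big[\sum_{j=1}^{T/k}\overline{f}_j(x_j)\Big]-\min_{x\in\overline{X}}\sum_{j=1}^{T/k}\overline{f}_j(x)\Big)\le R(T)+\frac{n}{\sqrt{kT}}.$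
   Context: Sums over $j$ range over the $T/k$ intervals; expectations are over the random indices $i_j$ and the learner's randomness. *)

From HB Require Import structures.
From mathcomp Require Import all_boot all_order all_algebra.
From mathcomp Require Import all_classical all_reals all_analysis.
Set Implicit Arguments. Unset Strict Implicit. Unset Printing Implicit Defensive.
Import Order.TTheory GRing.Theory Num.Theory.
Local Open Scope ring_scope.

Section OnlineDefs.
Variables (R : realType) (X : Type) (m k : nat).

Definition fbar (f : 'I_m -> 'I_k -> X -> R) (j : 'I_m) (x : X) : R :=
  (k%:R)^-1 * \sum_(i < k) f j i x.

Definition fr (f : 'I_m -> 'I_k -> X -> R) (iota : {ffun 'I_m -> 'I_k})
  (j : 'I_m) : X -> R := f j (iota j).

Definition history (f : 'I_m -> 'I_k -> X -> R) (iota : {ffun 'I_m -> 'I_k})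
  (j : 'I_m) : seq (X -> R) :=
  take j [seq fr f iota l | l <- enum 'I_m].

(* expectation over i_1..i_m drawn i.i.d. uniformly from {1..k} *)
Definition Eunif (F : {ffun 'I_m -> 'I_k} -> R) : R :=
  ((k%:R) ^+ m)^-1 * \sum_(iota : {ffun 'I_m -> 'I_k}) F iota.

Definition best (g : 'I_m -> X -> R) : R :=
  inf (range (fun x : X => \sum_(j < m) g j x)).

End OnlineDefs.

(* Given the indices drawn before interval [j], the learner's choice [x_j] is
   independent of [i_j]; averaging over [i_j] turns its expected cost against
   [f^r_j] into its expected cost against [fbar_j].  So the expected online costs
   of the two settings coincide, while for the benchmark
   [E min_x sum_j f^r_j x <= min_x E sum_j f^r_j x = min_x sum_j fbar_j x]. *)

From HB Require Import structures.
From mathcomp Require Import all_boot all_order all_algebra.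
From mathcomp Require Import all_classical all_reals all_analysis.
Import Order.TTheory GRing.Theory Num.Theory.
Local Open Scope ring_scope.

Section RintegralSum.
Context d (T : measurableType d) (R : realType).
Variables (mu : {measure set T -> \bar R}) (D : set T) (mD : measurable D).

Lemma integrable_sumr (I : Type) (s : seq I) (F : I -> T -> R) :
  (forall i, mu.-integrable D (EFin \o F i)) ->
  mu.-integrable D (EFin \o (fun x => \sum_(i <- s) F i x)).
Proof.
move=> intF; elim: s => [|i s ih].
  by apply: eq_integrable mD _ _ _ (integrable0 mu D) => x _ /=; rewrite big_nil.
apply: eq_integrable mD _ _ _ (integrableD mD (intF i) ih) => x _ /=.
by rewrite big_cons EFinD.
Qed.

Lemma Rintegral_sum (I : Type) (s : seq I) (F : I -> T -> R) :
  (forall i, mu.-integrable D (EFin \o F i)) ->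
  \int[mu]_(x in D) (\sum_(i <- s) F i x) = \sum_(i <- s) \int[mu]_(x in D) F i x.
Proof.
move=> intF; elim: s => [|i s ih].
  by under eq_Rintegral do rewrite big_nil; rewrite big_nil Rintegral_cst// mul0r.
under eq_Rintegral do rewrite big_cons.
by rewrite big_cons RintegralD// ?ih//; exact: integrable_sumr.
Qed.

End RintegralSum.

Lemma probability_bounded_integrable {d} {T : measurableType d} {R : realType}
    (P : probability T R) (g : T -> R) (B : R) :
  measurable_fun setT g -> (forall x, `|g x| <= B) ->
  P.-integrable setT (EFin \o g).
Proof.
move=> mg gB; apply: measurable_bounded_integrable => //.
  exact: le_lt_trans (probability_le1 P measurableT) (ltry 1).
by exists B; split; [exact: num_real | move=> M BM x _; exact: le_trans (gB x) (ltW BM)].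
Qed.

Lemma sum_ffun_resample (V : nmodType) (m k : nat) (j : 'I_m)
    (F : 'I_k -> {ffun 'I_m -> 'I_k} -> V) :
  (forall i (iota iota' : {ffun 'I_m -> 'I_k}),
     (forall l, l != j -> iota l = iota' l) ->
     F i iota = F i iota') ->
  (\sum_(iota : {ffun 'I_m -> 'I_k}) F (iota j) iota) *+ k =
  \sum_(iota : {ffun 'I_m -> 'I_k}) \sum_(i < k) F i iota.
Proof.
case: k F => [|k] F Fj; first by rewrite mulr0n big1 // => iota _; rewrite big_ord0.
pose shift (a : 'I_k.+1) (iota : {ffun 'I_m -> 'I_k.+1}) :=
  [ffun l => if l == j then iota j + a else iota l].
have shift_inj a : injective (shift a).
  move=> iota1 iota2 /ffunP e; apply/ffunP => l; have := e l; rewrite !ffunE.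
  by case: eqP => [->|//]; exact: addIr.
(* Shifting coordinate [j] by [a] permutes the index vectors and, by [Fj],
   does not change [F i]. *)
have sum_shift a : \sum_(iota : {ffun 'I_m -> 'I_k.+1}) F (iota j) iota =
                   \sum_(iota : {ffun 'I_m -> 'I_k.+1}) F (iota j + a) iota.
  rewrite (reindex_inj (shift_inj a)); apply: eq_bigr => iota _.
  rewrite ffunE eqxx; apply: Fj => l /negbTE lj.
  by rewrite ffunE lj.
transitivity (\sum_(a < k.+1) \sum_(iota : {ffun 'I_m -> 'I_k.+1}) F (iota j + a) iota).
  by rewrite -(eq_bigr _ (fun a _ => sum_shift a)) sumr_const card_ord.
rewrite exchange_big; apply: eq_bigr => iota _.
by rewrite [RHS](reindex_inj (addrI (iota j))).
Qed.

Section UniformExpectation.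
Variables (R : realType) (m k : nat).
Implicit Types (F G : {ffun 'I_m -> 'I_k} -> R).

Lemma Eunif_sum (I : Type) (s : seq I) (F : I -> {ffun 'I_m -> 'I_k} -> R) :
  Eunif (fun iota => \sum_(j <- s) F j iota) = \sum_(j <- s) Eunif (F j).
Proof. by rewrite /Eunif exchange_big mulr_sumr. Qed.

Lemma EunifB F G : Eunif (fun iota => F iota - G iota) = Eunif F - Eunif G.
Proof. by rewrite /Eunif sumrB mulrBr. Qed.

Lemma ler_Eunif F G : (forall iota, F iota <= G iota) -> Eunif F <= Eunif G.
Proof.
by move=> FG; apply: ler_wpM2l; [rewrite invr_ge0 exprn_ge0 | exact: ler_sum].
Qed.

Hypothesis k_gt0 : (0 < k)%N.

Lemma Eunif_cst (c : R) : Eunif (fun _ : {ffun 'I_m -> 'I_k} => c) = c.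
Proof.
rewrite /Eunif sumr_const card_ffun !card_ord -[c *+ _]mulr_natl natrX mulrA.
by rewrite mulVf ?mul1r // expf_neq0 // pnatr_eq0 -lt0n.
Qed.

Lemma Eunif_resample (j : 'I_m) (F : 'I_k -> {ffun 'I_m -> 'I_k} -> R) :
  (forall i (iota iota' : {ffun 'I_m -> 'I_k}),
     (forall l, l != j -> iota l = iota' l) -> F i iota = F i iota') ->
  Eunif (fun iota => F (iota j) iota) =
  Eunif (fun iota => (k%:R)^-1 * \sum_(i < k) F i iota).
Proof.
move=> Fj; rewrite /Eunif -mulr_sumr -(@sum_ffun_resample _ _ _ _ _ Fj).
congr (_ * _); rewrite mulrnAr -mulrnAl -[_^-1 *+ k]mulr_natr mulVf ?mul1r //.
by rewrite pnatr_eq0 -lt0n.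
Qed.

End UniformExpectation.

Lemma probability_nonempty {d} {T : measurableType d} {R : realType}
    (P : probability T R) : ([set: T] !=set0)%classic.
Proof.
apply/set0P/eqP => T0; have := probability_setT P.
by rewrite T0 measure0 => /esym/eqP; rewrite onee_eq0.
Qed.

Section OnlineLearning.
Context {R : realType} {X : Type} {m k : nat} {f : 'I_m -> 'I_k -> X -> R}.
Hypothesis k_gt0 : (0 < k)%N.

Lemma eq_history (iota iota' : {ffun 'I_m -> 'I_k}) (j : 'I_m) :
  (forall l : 'I_m, (l < j)%N -> iota l = iota' l) ->
  history f iota j = history f iota' j.
Proof.
move=> eq_lt; rewrite /history -[LHS]map_take -[RHS]map_take.
apply/eq_in_map => l; rewrite in_take ?mem_enum // index_enum_ord => /eq_lt.
by rewrite /fr => ->.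
Qed.

Lemma sum_fbar_Eunif (x : X) :
  \sum_(j < m) fbar f j x = Eunif (fun iota => \sum_(j < m) fr f iota j x).
Proof.
rewrite Eunif_sum; apply: eq_bigr => j _.
by rewrite (@Eunif_resample _ _ _ k_gt0 j (fun i _ => f j i x)) // Eunif_cst.
Qed.

Lemma Eunif_best_fr_le (x0 : X) : (forall j i x, 0 <= f j i x) ->
  Eunif (fun iota => best (fr f iota)) <= best (fbar f).
Proof.
move=> f_ge0; apply: lb_le_inf; first by exists (\sum_(j < m) fbar f j x0), x0.
move=> _ [x _ <-]; rewrite sum_fbar_Eunif; apply: ler_Eunif => iota.
apply: ge_inf; last by exists x.
by exists 0 => _ [y _ <-]; apply: sumr_ge0 => j _; exact: f_ge0.
Qed.

Context {d} {Omega : measurableType d} {mu : {measure set Omega -> \bar R}}.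
Context {sigma : nat -> Omega -> seq (X -> R) -> X}.
Hypothesis play_integrable : forall (j : 'I_m) i h,
  mu.-integrable setT (EFin \o (fun w => f j i (sigma j w h))).

Let play_cost (j : 'I_m) (i : 'I_k) (h : seq (X -> R)) : R :=
  Rintegral mu setT (fun w => f j i (sigma j w h)).

Lemma Rintegral_online_fr (iota : {ffun 'I_m -> 'I_k}) :
  Rintegral mu setT (fun w =>
    \sum_(j < m) fr f iota j (sigma j w (history f iota j))) =
  \sum_(j < m) play_cost j (iota j) (history f iota j).
Proof. by rewrite Rintegral_sum // => j; exact: play_integrable. Qed.

Lemma Rintegral_online_fbar (iota : {ffun 'I_m -> 'I_k}) :
  Rintegral mu setT (fun w =>
    \sum_(j < m) fbar f j (sigma j w (history f iota j))) =
  \sum_(j < m) (k%:R)^-1 * \sum_(i < k) play_cost j i (history f iota j).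
Proof.
have int_sum j h : mu.-integrable setT
    (EFin \o (fun w => \sum_(i < k) f j i (sigma j w h))).
  exact: integrable_sumr.
rewrite Rintegral_sum // => [|j]; last first.
  by apply: eq_integrable (integrableZl _ _ (int_sum j _)) => // w _.
by apply: eq_bigr => j _; rewrite /fbar RintegralZl // Rintegral_sum.
Qed.

Lemma Eunif_online_fr_fbar :
  Eunif (fun iota => Rintegral mu setT (fun w =>
    \sum_(j < m) fr f iota j (sigma j w (history f iota j)))) =
  Eunif (fun iota => Rintegral mu setT (fun w =>
    \sum_(j < m) fbar f j (sigma j w (history f iota j)))).
Proof.
under eq_fun do rewrite Rintegral_online_fr.
under [in RHS]eq_fun do rewrite Rintegral_online_fbar.
rewrite !Eunif_sum; apply: eq_bigr => j _.
apply: (@Eunif_resample _ _ _ k_gt0 j (fun i iota => play_cost j i (history f iota j))).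
move=> i iota iota' eq_off_j; congr play_cost; apply: eq_history => l lj.
by apply: eq_off_j; rewrite neq_ltn lj.
Qed.

End OnlineLearning.

Theorem lemma4p2 (R : realType) (X : Type) (T k : nat) (n RT : R)
  (Hk : (0 < k)%N) (HT : (0 < T)%N) (Hdiv : (k %| T)%N)
  (f : 'I_(T %/ k) -> 'I_k -> X -> R)
  (Hf : forall j i x, 0 <= f j i x <= n)
  (d : measure_display) (Omega : measurableType d) (P : probability Omega R)
  (sigma : nat -> Omega -> seq (X -> R) -> X)
  (Hmeas : forall (j : nat) (h : seq (X -> R)) (j' : 'I_(T %/ k)) (i : 'I_k),
      measurable_fun setT (fun w => f j' i (sigma j w h)))
  (Hregret :
     (T%:R)^-1 * Eunif (fun iota =>
        Rintegral P setT (fun w =>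
          \sum_(j < T %/ k) fr f iota j (sigma j w (history f iota j)))
        - best (fr f iota)) <= RT) :
  (T%:R)^-1 * (Eunif (fun iota =>
        Rintegral P setT (fun w =>
          \sum_(j < T %/ k) fbar f j (sigma j w (history f iota j))))
      - best (fbar f))
    <= RT + n / Num.sqrt ((k * T)%:R).
Proof.
have [w0 _] := probability_nonempty P.
pose x0 := sigma 0%N w0 [::].
have f_ge0 j i x : 0 <= f j i x by case/andP: (Hf j i x).
have n_ge0 : 0 <= n.
  have Tk_gt0 : (0 < T %/ k)%N by rewrite divn_gt0 // dvdn_leq.
  by case/andP: (Hf (Ordinal Tk_gt0) (Ordinal Hk) x0) => /le_trans; apply.
have play_integrable j i h :
    P.-integrable setT (EFin \o (fun w => f j i (sigma j w h))).
  apply: (probability_bounded_integrable _ _ n (Hmeas _ _ _ _)) => w.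
  by rewrite ger0_norm ?f_ge0 //; case/andP: (Hf j i (sigma j w h)).
rewrite EunifB (Eunif_online_fr_fbar Hk play_integrable) in Hregret.
apply: le_trans (_ : _ <= RT) _; last by rewrite lerDl divr_ge0 ?sqrtr_ge0.
apply: le_trans Hregret; rewrite ler_wpM2l ?invr_ge0 ?ler0n // lerD2l lerN2.
exact: Eunif_best_fr_le Hk x0 f_ge0.
Qed.
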